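(* Fix a finite relational vocabulary $\sigma$ and integers $n,d\ge 0$. Two objects $X,Y$ of $\mathbf{STRUCT}[\sigma_n]_{(d,0)}^{\widetilde{\mathcal{T}(\sigma_n)}}$ are homomorphically equivalent if and only if they are homotopy equivalent in the generalized core model structure on this category.
   Context: Let $\sigma=\langle R_1,\dots,R_l\rangle$ be a finite relational vocabulary, $R_i$ of arity $p_i$, and $\sigma_n$ its expansion by $n$ constant symbols; all structures are finite. For a $\sigma$-structure $\mathfrak{A}$, its Gaifman graph has vertex set $A$ and an edge between $a,b$ iff both occur in a tuple of some $R_i^{\mathfrak{A}}$; $d(\cdot,\cdot)$ is shortest-path distance, $d(\vec a,b)=\min_i d(a_i,b)$, $B_d^{\mathfrak{A}}(\vec a)=\{b: d(\vec a,b)\le d\}$, and the $d$-neighborhood $N_d^{\mathfrak{A}}(\vec a)$ is the $\sigma_n$-structure on $B_d^{\mathfrak{A}}(\vec a)$ with relations $R_i^{\mathfrak{A}}\cap B_d^{\mathfrak{A}}(\vec a)^{p_i}$ and constants $a_1,\dots,a_n$. Homomorphisms of $d$-neighborhoods are relation-preserving maps of balls sending $a_i\mapsto b_i$. $\widetilde{\mathcal{T}(\sigma_n)}$ is the $\sigma_n$-structure whose universe is the set of closed $\sigma_n$-terms (the constant symbols), constants interpreted as themselves and all relations empty. The category $\mathbf{STRUCT}[\sigma_n]_{(d,0)}^{\widetilde{\mathcal{T}(\sigma_n)}}$ has objects the $d$-neighborhoods $N_d^{\mathfrak{A}}(\vec a)$, the $0$-neighborhoods $N_0^{\mathfrak{A}}(a)$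 and $\widetilde{\mathcal{T}(\sigma_n)}$; morphisms are homomorphisms of $d$-neighborhoods, the unique homomorphism $\widetilde{\mathcal{T}(\sigma_n)}\to N_d^{\mathfrak{A}}(\vec a)$, and the unique homomorphism $N_d^{\mathfrak{A}}(\vec a)\to N_0^{\mathfrak{A}}(a)$. Two objects $X,Y$ are homomorphically equivalent if there are morphisms $X\to Y$ and $Y\to X$. The generalized core model structure (of Droz and Zakharevich) is the model structure in which a morphism $f:X\to Y$ is a weak equivalence iff $X$ and $Y$ are homomorphically equivalent, and the acyclic fibrations are exactly the retractions (morphisms $r$ with $r\circ s=\mathrm{id}$ for some $s$); cofibrations are the morphisms with the left lifting property w.r.t. retractions and fibrations those with the right lifting property w.r.t. acyclic cofibrations. $X$ and $Y$ are homotopy equivalent if there are morphisms $f:X\to Y$, $g:Y\to X$ with $g\circ f$ homotopic to $\mathrm{id}_X$ and $f\circ g$ homotopic to $\mathrm{id}_Y$ in this model structure. *)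

From mathcomp Require Import all_boot.

Set Implicit Arguments.
Unset Strict Implicit.
Unset Printing Implicit Defensive.

(* Vocabulary sigma = <R_1,...,R_l>, R_i of arity p i;  n constants;   *)
(* neighbourhood radius d.                                             *)
Section Cat.
Variables (l : nat) (p : 'I_l -> nat) (n d : nat).

(* A finite sigma-structure A (universe 'I_card, every finite structure
   is isomorphic to one of these) together with a tuple a in A^n. *)
Record pstruct := PStruct {
  ps_card : nat;
  ps_rel : forall i : 'I_l, {set {ffun 'I_(p i) -> 'I_ps_card}};
  ps_cst : {ffun 'I_n -> 'I_ps_card} }.

Definition gadj (A : pstruct) (x y : 'I_(ps_card A)) : bool :=
  [exists i : 'I_l, [exists t in ps_rel A i, (x \in codom t) && (y \in codom t)]].

(* B_k(a) = { b | d(a, b) <= k } *)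
Fixpoint ballk (A : pstruct) (k : nat) : {set 'I_(ps_card A)} :=
  match k with
  | 0 => [set x | x \in codom (ps_cst A)]
  | k'.+1 => ballk A k' :|: [set y | [exists x in ballk A k', gadj x y]]
  end.

Definition ball (A : pstruct) := ballk A d.

Definition ballT (A : pstruct) := {x : 'I_(ps_card A) | x \in ball A}.

Definition is_nhom (A B : pstruct) (f : {ffun ballT A -> ballT B}) : bool :=
  [forall i : 'I_n, forall x : ballT A,
     (val x == ps_cst A i) ==> (val (f x) == ps_cst B i)] &&
  [forall i : 'I_l, forall t : {ffun 'I_(p i) -> ballT A},
     ([ffun j => val (t j)] \in ps_rel A i) ==>
     ([ffun j => val (f (t j))] \in ps_rel B i)].

Definition nhom (A B : pstruct) := {f : {ffun ballT A -> ballT B} | is_nhom f}.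

Lemma is_nhom_id (A : pstruct) : is_nhom [ffun x : ballT A => x].
Proof.
apply/andP; split.
  by apply/forallP => i; apply/forallP => x; rewrite ffunE; apply/implyP.
apply/forallP => i; apply/forallP => t; apply/implyP => H.
suff -> : [ffun j => val ([ffun x : ballT A => x] (t j))] = [ffun j => val (t j)] by [].
by apply/ffunP => j; rewrite !ffunE.
Qed.

Lemma is_nhom_comp (A B C : pstruct) (g : {ffun ballT B -> ballT C})
  (f : {ffun ballT A -> ballT B}) :
  is_nhom g -> is_nhom f -> is_nhom [ffun x => g (f x)].
Proof.
move=> /andP [gc gr] /andP [fc fr]; apply/andP; split.
  apply/forallP => i; apply/forallP => x; apply/implyP => /eqP Hx.
  rewrite ffunE.
  have /implyP H1 := forallP (forallP fc i) x.
  have /eqP H2 := H1 (introT eqP Hx).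
  have /implyP H3 := forallP (forallP gc i) (f x).
  by apply: H3; apply/eqP.
apply/forallP => i; apply/forallP => t; apply/implyP => Ht.
have /implyP H1 := forallP (forallP fr i) t.
have H2 := H1 Ht.
have /implyP H3 := forallP (forallP gr i) [ffun j => f (t j)].
have H4 : [ffun j => val ([ffun j0 => f (t j0)] j)] \in ps_rel B i.
  suff -> : [ffun j => val ([ffun j0 => f (t j0)] j)] =
            [ffun j => val (f (t j))] by [].
  by apply/ffunP => j; rewrite !ffunE.
have H5 := H3 H4.
suff -> : [ffun j => val ([ffun x => g (f x)] (t j))] =
          [ffun j => val (g ([ffun j0 => f (t j0)] j))] by [].
by apply/ffunP => j; rewrite !ffunE.
Qed.

Definition nhom_id (A : pstruct) : nhom A A := exist (@is_nhom A A) _ (is_nhom_id A).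

Definition nhom_comp (A B C : pstruct) (g : nhom B C) (f : nhom A B) : nhom A C :=
  exist (@is_nhom A C) _ (is_nhom_comp (proj2_sig g) (proj2_sig f)).

Definition nhom_exists (A B : pstruct) : bool :=
  [exists f : {ffun ballT A -> ballT B}, is_nhom f].

Lemma nhom_exists_comp (A B C : pstruct) :
  nhom A B -> nhom_exists B C -> nhom_exists A C.
Proof.
move=> f /existsP [g Hg]; apply/existsP.
exists [ffun x => g (proj1_sig f x)].
exact: is_nhom_comp Hg (proj2_sig f).
Qed.

(* Objects of STRUCT[sigma_n]_(d,0)^T:
   OT    = the term structure T(sigma_n)~,
   ON A  = the d-neighbourhood N_d^A(a),
   O0 A  = the 0-neighbourhood N_0^A(a). *)
Inductive obj := OT | ON of pstruct | O0 of pstruct.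

(* Morphisms: homomorphisms of d-neighbourhoods, the unique map out of T,
   the unique map N_d^A(a) -> N_0^A(a), identities, and their composites. *)
Definition Hom (X Y : obj) : Type :=
  match X, Y with
  | OT, _ => unit
  | ON A, ON B => nhom A B
  | ON A, O0 B => {u : unit | nhom_exists A B}
  | O0 A, O0 B => {u : unit | A = B}
  | _, _ => Empty_set
  end.

Definition idm (X : obj) : Hom X X :=
  match X with
  | OT => tt
  | ON A => nhom_id A
  | O0 A => exist _ tt erefl
  end.

Definition comp (X Y Z : obj) : Hom Y Z -> Hom X Y -> Hom X Z.
Proof.
destruct X as [|A|A]; destruct Y as [|B|B]; destruct Z as [|C|C];
  simpl; intros g f.
all: try exact tt.
all: try (match type of f with Empty_set => case f end).
all: try (match type of g with Empty_set => case g end).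
- exact (nhom_comp g f).
- exists tt. exact (nhom_exists_comp f (proj2_sig g)).
- exists tt. case: g => _ <-. exact (proj2_sig f).
- exists tt. exact (eq_trans (proj2_sig f) (proj2_sig g)).
Defined.


Definition homeq (X Y : obj) : Prop := inhabited (Hom X Y) /\ inhabited (Hom Y X).

Definition weq (X Y : obj) (f : Hom X Y) : Prop := homeq X Y.

(* acyclic fibrations = retractions *)
Definition retraction (X Y : obj) (r : Hom X Y) : Prop :=
  exists s : Hom Y X, comp r s = idm Y.

Definition cofib (A B : obj) (i : Hom A B) : Prop :=
  forall (E F : obj) (q : Hom E F), retraction q ->
  forall (u : Hom A E) (v : Hom B F), comp q u = comp v i ->
  exists h : Hom B E, comp h i = u /\ comp q h = v.

Definition acofib (A B : obj) (i : Hom A B) : Prop := cofib i /\ weq i.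

Definition fib (E F : obj) (q : Hom E F) : Prop :=
  forall (A B : obj) (i : Hom A B), acofib i ->
  forall (u : Hom A E) (v : Hom B F), comp q u = comp v i ->
  exists h : Hom B E, comp h i = u /\ comp q h = v.

(* Cylinder object for X: a factorisation of the fold map X |_| X -> X
   as a cofibration (j0,j1) followed by a weak equivalence s.  Since the
   category need not have coproducts, "(j0,j1) : X |_| X -> C is a
   cofibration" is expressed representably: the pair (j0,j1) has the
   left lifting property against every acyclic fibration (retraction). *)
Definition cylinder (X C : obj) (j0 j1 : Hom X C) (s : Hom C X) : Prop :=
  [/\ comp s j0 = idm X, comp s j1 = idm X, weq s &
    forall (E F : obj) (q : Hom E F), retraction q ->
    forall (u0 u1 : Hom X E) (v : Hom C F),
      comp q u0 = comp v j0 -> comp q u1 = comp v j1 ->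
      exists h : Hom C E, [/\ comp h j0 = u0, comp h j1 = u1 & comp q h = v]].

(* Path object for Y: a factorisation of the diagonal Y -> Y x Y as a
   weak equivalence r followed by a fibration (e0,e1), the latter again
   expressed representably (RLP against acyclic cofibrations). *)
Definition pathobj (Y P : obj) (r : Hom Y P) (e0 e1 : Hom P Y) : Prop :=
  [/\ comp e0 r = idm Y, comp e1 r = idm Y, weq r &
    forall (A B : obj) (i : Hom A B), acofib i ->
    forall (u : Hom A P) (v0 v1 : Hom B Y),
      comp e0 u = comp v0 i -> comp e1 u = comp v1 i ->
      exists h : Hom B P, [/\ comp h i = u, comp e0 h = v0 & comp e1 h = v1]].

Definition left_htpc (X Y : obj) (f g : Hom X Y) : Prop :=
  exists (C : obj) (j0 j1 : Hom X C) (s : Hom C X) (H : Hom C Y),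
    [/\ cylinder j0 j1 s, comp H j0 = f & comp H j1 = g].

Definition right_htpc (X Y : obj) (f g : Hom X Y) : Prop :=
  exists (P : obj) (r : Hom Y P) (e0 e1 : Hom P Y) (K : Hom X P),
    [/\ pathobj r e0 e1, comp e0 K = f & comp e1 K = g].

(* homotopic = left and right homotopic (Hovey, Def. 1.2.4) *)
Definition homotopic (X Y : obj) (f g : Hom X Y) : Prop :=
  left_htpc f g /\ right_htpc f g.

Definition htpy_equiv (X Y : obj) : Prop :=
  exists (f : Hom X Y) (g : Hom Y X),
    homotopic (comp g f) (idm X) /\ homotopic (comp f g) (idm Y).

End Cat.

From Pilot Require Import Defs.
From mathcomp Require Import all_boot.
From Stdlib Require Import ProofIrrelevance.

(* Any two parallel morphisms of this category are homotopic.  Out of the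
   term structure and into or out of a 0-neighbourhood, hom-sets have at most
   one element, so identities give trivial cylinders and path objects.  For a
   d-neighbourhood of A, a cylinder is the d-neighbourhood of two copies of A
   glued along the constants, and a path object is the d-neighbourhood of
   A x A: two homomorphisms f, g out of N_d(A) glue to a left homotopy, and
   two homomorphisms into N_d(B) pair to a right homotopy.  Hence homotopy
   equivalence only asks for morphisms in both directions. *)

Set Implicit Arguments.
Unset Strict Implicit.
Unset Printing Implicit Defensive.

Section Neighbourhoods.
Variables (l : nat) (p : 'I_l -> nat) (n d : nat).
Local Notation pstruct := (pstruct p n).
Local Notation ballT := (ballT d).
Local Notation nhom := (nhom d).

Lemma ballk_sub (A : pstruct) k k' : k <= k' -> ballk A k \subset ballk A k'.
Proof.
move=> /subnK <-; elim: (k' - k) => [|m IH] //=.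
exact: subset_trans IH (subsetUl _ _).
Qed.

Definition is_ballhom (A C : pstruct) (phi : ballT A -> 'I_(ps_card C)) : Prop :=
  (forall i (x : ballT A), val x = ps_cst A i -> phi x = ps_cst C i) /\
  (forall i (t : {ffun 'I_(p i) -> ballT A}),
     [ffun j => val (t j)] \in ps_rel A i -> [ffun j => phi (t j)] \in ps_rel C i).

(* Such a map fixes the constants and does not increase Gaifman distance. *)
Lemma ballhom_in_ball (A C : pstruct) (phi : ballT A -> 'I_(ps_card C)) :
  is_ballhom phi -> forall x : ballT A, phi x \in ball d C.
Proof.
case=> Hc Hr.
suff H k : k <= d -> forall x : ballT A, val x \in ballk A k -> phi x \in ballk C k.
  by move=> x; apply: H (valP x).
elim: k => [|k IH] Hk x /=.
  by rewrite inE => /codomP [i /Hc ->]; rewrite inE codom_f.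
rewrite in_setU => /orP [Hx|]; first by rewrite in_setU (IH (ltnW Hk) x Hx).
rewrite inE => /existsP [y /andP [Hy /existsP [i /existsP [t /andP [Ht /andP]]]]].
move=> [/codomP [j0 Hj0] /codomP [j1 Hj1]].
have t_ball j : t j \in ball d A.
  apply: subsetP (ballk_sub A Hk) _ _; rewrite /= in_setU inE; apply/orP; right.
  apply/existsP; exists y; rewrite Hy; apply/existsP; exists i; apply/existsP.
  by exists t; rewrite Ht codom_f Hj0 codom_f.
pose tau := [ffun j => (exist _ (t j) (t_ball j) : ballT A)].
have Htau : [ffun j => val (tau j)] = t by apply/ffunP => j; rewrite !ffunE.
have tau_rel := Hr i tau; rewrite Htau in tau_rel.
have tau1 : tau j1 = x by apply: val_inj; rewrite ffunE /= Hj1.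
have tau0 : val (tau j0) \in ballk A k by rewrite ffunE /= -Hj0.
rewrite in_setU inE; apply/orP; right; apply/existsP; exists (phi (tau j0)).
rewrite (IH (ltnW Hk) _ tau0) /=; apply/existsP; exists i; apply/existsP.
exists [ffun j => phi (tau j)]; rewrite (tau_rel Ht) /=.
by apply/andP; split; apply/codomP; [exists j0 | exists j1]; rewrite [RHS]ffunE ?tau1.
Qed.

Section NhomOf.
Variables (A C : pstruct) (phi : ballT A -> 'I_(ps_card C)).
Hypothesis phi_hom : is_ballhom phi.

Definition nhom_of_fun : {ffun ballT A -> ballT C} :=
  [ffun x => (exist _ (phi x) (ballhom_in_ball phi_hom x) : ballT C)].

Lemma nhom_of_fun_hom : is_nhom nhom_of_fun.
Proof.
case: phi_hom => Hc Hr; apply/andP; split.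
  apply/forallP => i; apply/forallP => x; apply/implyP => /eqP Hx.
  by rewrite ffunE /= (Hc i x Hx).
apply/forallP => i; apply/forallP => t; apply/implyP => Ht.
rewrite (_ : [ffun j => _] = [ffun j => phi (t j)]) ?Hr //.
by apply/ffunP => j; rewrite !ffunE.
Qed.

Definition nhom_of : nhom A C := exist _ nhom_of_fun nhom_of_fun_hom.

Lemma nhom_ofE x : val (val nhom_of x) = phi x.
Proof. by rewrite /= ffunE. Qed.

End NhomOf.

Lemma nhom_ext (A C : pstruct) (f g : nhom A C) :
  (forall x, val (val f x) = val (val g x)) -> f = g.
Proof. by move=> fg; apply/val_inj/ffunP => x; apply/val_inj/fg. Qed.

Lemma nhom_compE (A B C : pstruct) (g : nhom B C) (f : nhom A B) x :
  val (nhom_comp g f) x = val g (val f x).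
Proof. by rewrite ffunE. Qed.

Lemma nhom_idE (A : pstruct) x : val (nhom_id d A) x = x.
Proof. by rewrite ffunE. Qed.

Lemma nhom_compA (A B C D : pstruct) (h : nhom C D) (g : nhom B C) (f : nhom A B) :
  nhom_comp h (nhom_comp g f) = nhom_comp (nhom_comp h g) f.
Proof. by apply: nhom_ext => x; rewrite !nhom_compE. Qed.

Lemma nhom_cst (A C : pstruct) (f : nhom A C) i (x : ballT A) :
  val x = ps_cst A i -> val (val f x) = ps_cst C i.
Proof.
by case: f => f /= /andP [/forallP /(_ i) /forallP /(_ x) /implyP Hc _] /eqP /Hc /eqP.
Qed.

Lemma nhom_rel (A C : pstruct) (f : nhom A C) i (t : {ffun 'I_(p i) -> ballT A}) :
  [ffun j => val (t j)] \in ps_rel A i -> [ffun j => val (val f (t j))] \in ps_rel C i.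
Proof. by case: f => f /= /andP [_ /forallP /(_ i) /forallP /(_ t) /implyP]. Qed.

Section Product.
Variables A B : pstruct.

Definition prod_ps : pstruct :=
  @PStruct l p n #|{: 'I_(ps_card A) * 'I_(ps_card B)}|
    (fun i => [set [ffun j => enum_rank ((u.1 : {ffun _ -> _}) j, (u.2 : {ffun _ -> _}) j)]
                | u in setX (ps_rel A i) (ps_rel B i)])
    [ffun i => enum_rank (ps_cst A i, ps_cst B i)].

Lemma prod_relP i (t : {ffun 'I_(p i) -> ballT prod_ps}) :
  [ffun j => val (t j)] \in ps_rel prod_ps i ->
  [ffun j => (enum_val (val (t j))).1] \in ps_rel A i /\
  [ffun j => (enum_val (val (t j))).2] \in ps_rel B i.
Proof.
case/imsetP => u; rewrite inE => /andP [u1 u2] /ffunP tu.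
have tuj j : enum_val (val (t j)) = (u.1 j, u.2 j).
  by move: (tu j); rewrite !ffunE => ->; rewrite enum_rankK.
have -> : [ffun j => (enum_val (val (t j))).1] = u.1.
  by apply/ffunP => j; rewrite ffunE tuj.
have -> : [ffun j => (enum_val (val (t j))).2] = u.2.
  by apply/ffunP => j; rewrite ffunE tuj.
by [].
Qed.

Lemma prod_fst_hom : is_ballhom (fun x : ballT prod_ps => (enum_val (val x)).1).
Proof. by split=> [i x -> | i t /prod_relP []]; rewrite ?ffunE ?enum_rankK. Qed.

Lemma prod_snd_hom : is_ballhom (fun x : ballT prod_ps => (enum_val (val x)).2).
Proof. by split=> [i x -> | i t /prod_relP []]; rewrite ?ffunE ?enum_rankK. Qed.

Definition prod_fst : nhom prod_ps A := nhom_of prod_fst_hom.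
Definition prod_snd : nhom prod_ps B := nhom_of prod_snd_hom.

Section Pairing.
Variables (C : pstruct) (v1 : nhom C A) (v2 : nhom C B).

Lemma prod_pair_hom : is_ballhom (fun x : ballT C =>
  enum_rank (val (val v1 x), val (val v2 x)) : 'I_(ps_card prod_ps)).
Proof.
split=> [i x Hx | i t Ht]; first by rewrite ffunE (nhom_cst v1 Hx) (nhom_cst v2 Hx).
apply/imsetP; exists ([ffun j => val (val v1 (t j))], [ffun j => val (val v2 (t j))]).
  by rewrite inE (nhom_rel v1 Ht) (nhom_rel v2 Ht).
by apply/ffunP => j; rewrite !ffunE.
Qed.

Definition prod_pair : nhom C prod_ps := nhom_of prod_pair_hom.

Lemma prod_fst_pair : nhom_comp prod_fst prod_pair = v1.
Proof. by apply: nhom_ext => x; rewrite nhom_compE !nhom_ofE enum_rankK. Qed.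

Lemma prod_snd_pair : nhom_comp prod_snd prod_pair = v2.
Proof. by apply: nhom_ext => x; rewrite nhom_compE !nhom_ofE enum_rankK. Qed.

End Pairing.

Lemma prod_hom_ext (C : pstruct) (f g : nhom C prod_ps) :
  nhom_comp prod_fst f = nhom_comp prod_fst g ->
  nhom_comp prod_snd f = nhom_comp prod_snd g -> f = g.
Proof.
move=> fg1 fg2; apply: nhom_ext => x; apply: (can_inj (@enum_valK _)).
move: (congr1 (fun h : nhom C A => val (val h x)) fg1).
move: (congr1 (fun h : nhom C B => val (val h x)) fg2).
rewrite !nhom_compE !nhom_ofE.
by case: (enum_val _) => ? ?; case: (enum_val _) => ? ? /= -> ->.
Qed.

End Product.

Section Cylinder.
Variable A : pstruct.

(* Point x of copy b is coded (b, x), except that the constants are shared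
   by both copies and always coded (false, x). *)
Definition cyl_code (b : bool) (x : 'I_(ps_card A)) : bool * 'I_(ps_card A) :=
  if x \in codom (ps_cst A) then (false, x) else (b, x).

Lemma cyl_code2 b x : (cyl_code b x).2 = x.
Proof. by rewrite /cyl_code; case: ifP. Qed.

Lemma cyl_code_cst b i : cyl_code b (ps_cst A i) = (false, ps_cst A i).
Proof. by rewrite /cyl_code codom_f. Qed.

Definition cyl_ps : pstruct :=
  @PStruct l p n #|{: bool * 'I_(ps_card A)}|
    (fun i => [set [ffun j => enum_rank (cyl_code u.1 ((u.2 : {ffun _ -> _}) j))]
                | u in setX [set: bool] (ps_rel A i)])
    [ffun i => enum_rank (false, ps_cst A i)].

Lemma cyl_relP i (t : {ffun 'I_(p i) -> ballT cyl_ps}) :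
  [ffun j => val (t j)] \in ps_rel cyl_ps i ->
  exists2 u : bool * {ffun 'I_(p i) -> 'I_(ps_card A)}, u.2 \in ps_rel A i &
    forall j, enum_val (val (t j)) = cyl_code u.1 (u.2 j).
Proof.
case/imsetP => u; rewrite inE => /andP [_ u2] /ffunP tu; exists u => // j.
by move: (tu j); rewrite !ffunE => ->; rewrite enum_rankK.
Qed.

Lemma cyl_fold_hom : is_ballhom (fun z : ballT cyl_ps => (enum_val (val z)).2).
Proof.
split=> [i z -> | i t /cyl_relP [u u2 tu]]; first by rewrite ffunE enum_rankK.
by rewrite (_ : [ffun j => _] = u.2) //; apply/ffunP => j; rewrite ffunE tu cyl_code2.
Qed.

Definition cyl_fold : nhom cyl_ps A := nhom_of cyl_fold_hom.

Lemma cyl_in_hom b : is_ballhom (fun x : ballT A =>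
  enum_rank (cyl_code b (val x)) : 'I_(ps_card cyl_ps)).
Proof.
split=> [i x -> | i t Ht]; first by rewrite cyl_code_cst ffunE.
apply/imsetP; exists (b, [ffun j => val (t j)]); first by rewrite inE Ht in_setT.
by apply/ffunP => j; rewrite !ffunE.
Qed.

Definition cyl_in b : nhom A cyl_ps := nhom_of (cyl_in_hom b).

Lemma cyl_fold_inE b x : val cyl_fold (val (cyl_in b) x) = x.
Proof. by apply: val_inj; rewrite !nhom_ofE enum_rankK cyl_code2. Qed.

Lemma cyl_fold_in b : nhom_comp cyl_fold (cyl_in b) = nhom_id d A.
Proof. by apply: nhom_ext => x; rewrite nhom_compE cyl_fold_inE nhom_idE. Qed.

Lemma cyl_ballk_code k z : z \in ballk cyl_ps k -> exists b y, z = enum_rank (cyl_code b y).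
Proof.
elim: k => [|k IH] /=.
  by rewrite inE => /codomP [i ->]; exists false, (ps_cst A i); rewrite ffunE cyl_code_cst.
rewrite in_setU => /orP [/IH //|].
rewrite inE => /existsP [y /andP [_ /existsP [i /existsP [t /andP [Ht /andP [_]]]]]].
by case/imsetP: Ht => u _ -> /codomP [j ->]; exists u.1, (u.2 j); rewrite ffunE.
Qed.

Lemma cyl_in_fold (z : ballT cyl_ps) : exists b, val (cyl_in b) (val cyl_fold z) = z.
Proof.
have [b [y zy]] := cyl_ballk_code (valP z).
exists b; apply: val_inj; rewrite !nhom_ofE.
by move: zy; case: z => /= z _ ->; rewrite enum_rankK cyl_code2.
Qed.

Lemma cyl_hom_ext (F : pstruct) (f g : nhom cyl_ps F) :
  nhom_comp f (cyl_in false) = nhom_comp g (cyl_in false) ->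
  nhom_comp f (cyl_in true) = nhom_comp g (cyl_in true) -> f = g.
Proof.
move=> fg0 fg1; apply: nhom_ext => z; have [b <-] := cyl_in_fold z.
have fgb : nhom_comp f (cyl_in b) = nhom_comp g (cyl_in b) by case: b.
move: (congr1 (fun h : nhom A F => val (val h (val cyl_fold z))) fgb).
by rewrite !nhom_compE.
Qed.

Section Glue.
Variables (E : pstruct) (u0 u1 : nhom A E).
Local Notation u b := (if b then u1 else u0).

Lemma cyl_code_glue b (x : ballT A) :
  val (val (u (cyl_code b (val x)).1) x) = val (val (u b) x).
Proof.
rewrite /cyl_code; case: (boolP (val x \in codom _)) => [/codomP [i xi] | //].
by case: b => //=; rewrite (nhom_cst u0 xi) (nhom_cst u1 xi).
Qed.

Lemma cyl_glue_hom : is_ballhom (fun z : ballT cyl_ps =>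
  val (val (u (enum_val (val z)).1) (val cyl_fold z))).
Proof.
split=> [i z zi | i t /cyl_relP [[b v] /= v_rel tv]].
  by apply: nhom_cst; rewrite nhom_ofE zi /= ffunE enum_rankK.
pose tau := [ffun j => val cyl_fold (t j)].
have fold_t j : val (val cyl_fold (t j)) = v j by rewrite nhom_ofE tv cyl_code2.
have tau_v : [ffun j => val (tau j)] = v.
  by apply/ffunP => j; rewrite ffunE /tau ffunE fold_t.
have := nhom_rel (u b) (t := tau); rewrite tau_v => /(_ v_rel).
suff -> : [ffun j => val (val (u (enum_val (val (t j))).1) (val cyl_fold (t j)))] =
          [ffun j => val (val (u b) (tau j))] by [].
apply/ffunP => j; rewrite ffunE [RHS]ffunE (ffunE (fun j => val cyl_fold (t j))).
by rewrite tv -fold_t cyl_code_glue.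
Qed.

Definition cyl_glue : nhom cyl_ps E := nhom_of cyl_glue_hom.

Lemma cyl_glue_in b : nhom_comp cyl_glue (cyl_in b) = u b.
Proof.
apply: nhom_ext => x.
by rewrite nhom_compE nhom_ofE cyl_fold_inE nhom_ofE enum_rankK cyl_code_glue.
Qed.

End Glue.
End Cylinder.

Local Notation obj := (obj p n).
Local Notation Hom := (Hom d).
Local Notation idm := (idm d).

Definition hom_from_uniq (X : obj) := forall Y (f g : Hom X Y), f = g.
Definition hom_to_uniq (Y : obj) := forall X (f g : Hom X Y), f = g.

Lemma hom_from_uniq_OT : hom_from_uniq (@OT l p n).
Proof. by move=> Y [] []. Qed.

Lemma hom_from_uniq_O0 A : hom_from_uniq (O0 A).
Proof. by case=> // B [[] ?] [[] ?]; congr exist; apply: proof_irrelevance. Qed.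

Lemma hom_to_uniq_OT : hom_to_uniq (@OT l p n).
Proof. by case=> // [] [] []. Qed.

Lemma hom_to_uniq_O0 B : hom_to_uniq (O0 B).
Proof.
by case=> [[] []|A|A] // [[] ?] [[] ?]; congr exist; apply: proof_irrelevance.
Qed.

Lemma cylinder_idm (X : obj) : hom_from_uniq X -> cylinder (idm X) (idm X) (idm X).
Proof.
move=> uX; split; try exact: uX; first by split; constructor; apply: idm.
by move=> E F q _ u0 u1 v _ _; exists u0; split; apply: uX.
Qed.

Lemma pathobj_idm (Y : obj) : hom_to_uniq Y -> pathobj (idm Y) (idm Y) (idm Y).
Proof.
move=> uY; split; try exact: uY; first by split; constructor; apply: idm.
by move=> A B i _ u v0 v1 _ _; exists v0; split; apply: uY.
Qed.

Lemma cylinder_cyl (A : pstruct) :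
  cylinder (X := ON A) (C := ON (cyl_ps A)) (cyl_in A false) (cyl_in A true) (cyl_fold A).
Proof.
split; try exact: cyl_fold_in.
  by split; [constructor; apply: cyl_fold | constructor; apply: cyl_in false].
move=> [|E|E] F q _ u0 u1 v qu0 qu1; first by case: u0.
  exists (cyl_glue u0 u1); split; try exact: cyl_glue_in.
  case: F q v qu0 qu1 => [[]|F|F] q v qu0 qu1; last exact: (@hom_to_uniq_O0 F).
  by apply: cyl_hom_ext; rewrite -nhom_compA cyl_glue_in; [exact: qu0 | exact: qu1].
case: F q v qu0 qu1 => [|F|F] q v qu0 qu1; try by case: q.
exists (Defs.comp u0 (cyl_fold A : Hom (ON (cyl_ps A)) (ON A))).
by split; [apply: (@hom_to_uniq_O0 E) .. | apply: (@hom_to_uniq_O0 F)].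
Qed.

Lemma pathobj_prod (B : pstruct) :
  pathobj (Y := ON B) (P := ON (prod_ps B B))
    (prod_pair (nhom_id d B) (nhom_id d B)) (prod_fst B B) (prod_snd B B).
Proof.
split; try exact: prod_fst_pair; try exact: prod_snd_pair.
  by split; [constructor; apply: prod_pair; apply: nhom_id | constructor; apply: prod_fst].
move=> A [|C|C] i _ u v0 v1 uv0 uv1; last by case: v0.
  case: A i u uv0 uv1 => [|A|A] i u uv0 uv1; try by case: i.
  by exists tt; split; apply: hom_from_uniq_OT.
exists (prod_pair v0 v1); split; try exact: prod_fst_pair; try exact: prod_snd_pair.
case: A i u uv0 uv1 => [|A|A] i u uv0 uv1; [exact: hom_from_uniq_OT | | by case: i].
by apply: prod_hom_ext; rewrite nhom_compA ?prod_fst_pair ?prod_snd_pair; apply: esym.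
Qed.

Lemma left_htpc_all (X Y : obj) (f g : Hom X Y) : left_htpc f g.
Proof.
have trivial_cyl : hom_from_uniq X -> left_htpc f g.
  move=> uX; exists X, (idm X), (idm X), (idm X), f.
  by split; [exact: cylinder_idm | exact: uX ..].
case: X f g trivial_cyl => [|A|A] f g trivial_cyl.
- exact/trivial_cyl/hom_from_uniq_OT.
- exists (ON (cyl_ps A)), (cyl_in A false), (cyl_in A true), (cyl_fold A).
  case: Y f g {trivial_cyl} => [[]|B|B] f g.
    by exists (cyl_glue f g); split; [exact: cylinder_cyl | exact: cyl_glue_in ..].
  exists (Defs.comp f (cyl_fold A : Hom (ON (cyl_ps A)) (ON A))).
  by split; [exact: cylinder_cyl | apply: (@hom_to_uniq_O0 B) ..].
- exact/trivial_cyl/hom_from_uniq_O0.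
Qed.

Lemma right_htpc_all (X Y : obj) (f g : Hom X Y) : right_htpc f g.
Proof.
have trivial_path : hom_to_uniq Y -> right_htpc f g.
  move=> uY; exists Y, (idm Y), (idm Y), (idm Y), f.
  by split; [exact: pathobj_idm | exact: uY ..].
case: Y f g trivial_path => [|B|B] f g trivial_path.
- exact/trivial_path/hom_to_uniq_OT.
- exists (ON (prod_ps B B)), (prod_pair (nhom_id d B) (nhom_id d B)).
  exists (prod_fst B B), (prod_snd B B).
  case: X f g {trivial_path} => [|A|A] f g; last by case: f.
    by exists tt; split; [exact: pathobj_prod | apply: hom_from_uniq_OT ..].
  exists (prod_pair f g).
  by split; [exact: pathobj_prod | exact: prod_fst_pair | exact: prod_snd_pair].
- exact/trivial_path/hom_to_uniq_O0.
Qed.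

Lemma homotopic_all (X Y : obj) (f g : Hom X Y) : homotopic f g.
Proof. by split; [apply: left_htpc_all | apply: right_htpc_all]. Qed.

End Neighbourhoods.

Theorem proposition11 (l : nat) (p : 'I_l -> nat) (n d : nat) (X Y : obj p n) :
  homeq d X Y <-> htpy_equiv d X Y.
Proof.
split=> [[[f] [g]] | [f [g _]]]; last by split; constructor.
by exists f, g; split; apply: homotopic_all.
Qed.
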